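(* For every $n\in\mathbb{N}_{\geq1}$, the maximally balanced tree $T_n^{mb}$ with $n$ leaves has minimal Colless index, i.e. $\mathcal{C}(T_n^{mb})=c_n$, where $c_n$ is the minimum of $\mathcal{C}(T)$ over all rooted binary trees $T$ with $n$ leaves.
   Context: A rooted binary tree with $n\geq 2$ leaves is a rooted tree whose root has degree 2 and all other internal nodes have degree 3; for $n=1$ it is a single node. For an internal node $v$ with children $v_1,v_2$, let $\kappa(v_i)$ be the number of leaves descending from $v_i$ ($1$ if $v_i$ is a leaf), and let $bal(v)=|\kappa(v_1)-\kappa(v_2)|$. The Colless index is $\mathcal{C}(T)=\sum_v bal(v)$ over all internal nodes $v$. A rooted binary tree is maximally balanced if $bal(v)\leq 1$ for every internal node $v$; for each $n$ there is (up to isomorphism) a unique such tree $T_n^{mb}$. *)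

From Stdlib Require Import Arith.

(* Rooted binary trees: a single leaf, or a root with two (ordered) subtrees.
   Isomorphism classes correspond to trees modulo swapping children; all
   notions below are invariant under such swaps. *)
Inductive bintree : Type :=
| Leaf : bintree
| Node : bintree -> bintree -> bintree.

Fixpoint leaves (t : bintree) : nat :=
  match t with
  | Leaf => 1
  | Node l r => leaves l + leaves r
  end.

Definition absdiff (a b : nat) : nat := (a - b) + (b - a).

Definition bal (l r : bintree) : nat := absdiff (leaves l) (leaves r).

Fixpoint colless (t : bintree) : nat :=
  match t with
  | Leaf => 0
  | Node l r => bal l r + colless l + colless r
  end.

Fixpoint max_balanced (t : bintree) : Prop :=
  match t with
  | Leaf => True
  | Node l r => bal l r <= 1 /\ max_balanced l /\ max_balanced r
  end.

Definition is_min_colless (n c : nat) : Prop :=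
  (exists t, leaves t = n /\ colless t = c) /\
  (forall t, leaves t = n -> c <= colless t).

From Stdlib Require Import Arith Lia.

(* Let c n be the Colless index of the maximally balanced tree with n leaves:
   c 1 = 0, c (2k) = 2 c k and c (2k+1) = c (k+1) + c k + 1.  A tree whose root
   splits its n = a + b leaves has, by induction, Colless index at least
   c a + c b + |a - b|, so minimality reduces to the arithmetic inequality
   c (a + b) <= c a + c b + |a - b|.  That one is proved by strong induction on
   a + b, splitting on the parities of a and b: each case halves the arguments
   and combines at most two instances of the induction hypothesis. *)

Fixpoint mb_colless_fuel (fuel n : nat) : nat :=
  match fuel with
  | 0 => 0
  | S fuel' =>
      if n <=? 1 then 0
      else n mod 2 + mb_colless_fuel fuel' (n - n / 2) + mb_colless_fuel fuel' (n / 2)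
  end.

Definition mb_colless (n : nat) : nat := mb_colless_fuel n n.

Lemma div2_mod2_spec (n : nat) : n = 2 * (n / 2) + n mod 2 /\ n mod 2 < 2.
Proof. split; [apply Nat.div_mod | apply Nat.mod_upper_bound]; discriminate. Qed.

Lemma mb_colless_fuel_enough (fuel1 fuel2 n : nat) :
  n <= fuel1 -> n <= fuel2 -> mb_colless_fuel fuel1 n = mb_colless_fuel fuel2 n.
Proof.
  revert fuel2 n; induction fuel1 as [|fuel1 IH]; intros [|fuel2] n H1 H2.
  - reflexivity.
  - replace n with 0 by lia; reflexivity.
  - replace n with 0 by lia; reflexivity.
  - cbn [mb_colless_fuel]; destruct (Nat.leb_spec n 1) as [_|Hn]; [reflexivity|].
    pose proof (div2_mod2_spec n).
    rewrite (IH fuel2 (n - n / 2)), (IH fuel2 (n / 2)) by lia; reflexivity.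
Qed.

Lemma mb_colless_rec (n : nat) : 2 <= n ->
  mb_colless n = n mod 2 + mb_colless (n - n / 2) + mb_colless (n / 2).
Proof.
  intros Hn; unfold mb_colless.
  destruct n as [|n]; [lia|]; cbn [mb_colless_fuel].
  destruct (Nat.leb_spec (S n) 1) as [Hle|_]; [lia|].
  pose proof (div2_mod2_spec (S n)).
  rewrite (mb_colless_fuel_enough n (S n - S n / 2)),
          (mb_colless_fuel_enough n (S n / 2)) by lia.
  reflexivity.
Qed.

Lemma mb_colless_1 : mb_colless 1 = 0.
Proof. reflexivity. Qed.

Lemma mb_colless_double (k : nat) : 1 <= k -> mb_colless (2 * k) = 2 * mb_colless k.
Proof.
  intros Hk; rewrite mb_colless_rec by lia.
  pose proof (div2_mod2_spec (2 * k)).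
  replace ((2 * k) mod 2) with 0 by lia.
  replace ((2 * k) / 2) with k by lia.
  replace (2 * k - k) with k by lia; lia.
Qed.

Lemma mb_colless_double_succ (k : nat) : 1 <= k ->
  mb_colless (2 * k + 1) = 1 + mb_colless (k + 1) + mb_colless k.
Proof.
  intros Hk; rewrite mb_colless_rec by lia.
  pose proof (div2_mod2_spec (2 * k + 1)).
  replace ((2 * k + 1) mod 2) with 1 by lia.
  replace ((2 * k + 1) / 2) with k by lia.
  replace (2 * k + 1 - k) with (k + 1) by lia; reflexivity.
Qed.

Lemma mb_colless_balanced_split (a b : nat) : 1 <= a -> 1 <= b -> absdiff a b <= 1 ->
  mb_colless (a + b) = mb_colless a + mb_colless b + absdiff a b.
Proof.
  unfold absdiff; intros Ha Hb Hab.
  assert (a = b \/ a = b + 1 \/ b = a + 1) as [-> | [-> | ->]] by lia.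
  - replace (b + b) with (2 * b) by lia; rewrite mb_colless_double by lia; lia.
  - replace (b + 1 + b) with (2 * b + 1) by lia; rewrite mb_colless_double_succ by lia; lia.
  - replace (a + (a + 1)) with (2 * a + 1) by lia; rewrite mb_colless_double_succ by lia; lia.
Qed.

Definition split_bound (a b : nat) : Prop :=
  mb_colless (a + b) <= mb_colless a + mb_colless b + absdiff a b.

Lemma split_bound_comm (a b : nat) : split_bound a b -> split_bound b a.
Proof. unfold split_bound, absdiff; rewrite Nat.add_comm; lia. Qed.

Section SplitBoundStep.

Variable m : nat.
Hypothesis IH : forall a b, 1 <= a -> 1 <= b -> a + b < m -> split_bound a b.

Lemma split_bound_even_even (x y : nat) : 1 <= x -> 1 <= y -> 2 * x + 2 * y <= m ->
  split_bound (2 * x) (2 * y).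
Proof.
  intros Hx Hy Hm; unfold split_bound.
  replace (2 * x + 2 * y) with (2 * (x + y)) by lia.
  rewrite !mb_colless_double by lia.
  pose proof (IH x y Hx Hy ltac:(lia)) as Hxy.
  unfold split_bound, absdiff in *; lia.
Qed.

Lemma split_bound_even_odd (x y : nat) : 1 <= x -> 2 * x + 2 * y + 1 <= m ->
  split_bound (2 * x) (2 * y + 1).
Proof.
  intros Hx Hm; unfold split_bound.
  replace (2 * x + (2 * y + 1)) with (2 * (x + y) + 1) by lia.
  rewrite mb_colless_double_succ, mb_colless_double by lia.
  destruct (Nat.eq_dec y 0) as [->|Hy].
  - change (2 * 0 + 1) with 1; rewrite mb_colless_1, Nat.add_0_r.
    pose proof (IH x 1 Hx ltac:(lia) ltac:(lia)) as Hx1.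
    unfold split_bound, absdiff in *; rewrite mb_colless_1 in Hx1; lia.
  - rewrite mb_colless_double_succ by lia.
    pose proof (IH x (y + 1) Hx ltac:(lia) ltac:(lia)) as Hx_y1.
    pose proof (IH x y Hx ltac:(lia) ltac:(lia)) as Hxy.
    unfold split_bound, absdiff in *; rewrite Nat.add_assoc in Hx_y1; lia.
Qed.

Lemma split_bound_odd_odd (x y : nat) : 2 * x + 2 * y + 2 <= m ->
  split_bound (2 * x + 1) (2 * y + 1).
Proof.
  intros Hm; unfold split_bound.
  replace (2 * x + 1 + (2 * y + 1)) with (2 * (x + y + 1)) by lia.
  rewrite mb_colless_double by lia.
  destruct (Nat.eq_dec x 0) as [->|Hx]; destruct (Nat.eq_dec y 0) as [->|Hy].
  - reflexivity.
  - change (2 * 0 + 1) with 1; rewrite mb_colless_1, mb_colless_double_succ by lia.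
    pose proof (IH y 1 ltac:(lia) ltac:(lia) ltac:(lia)) as Hy1.
    unfold split_bound, absdiff in *; rewrite mb_colless_1 in Hy1.
    replace (0 + y + 1) with (y + 1) by lia; lia.
  - change (2 * 0 + 1) with 1; rewrite mb_colless_1, mb_colless_double_succ by lia.
    pose proof (IH x 1 ltac:(lia) ltac:(lia) ltac:(lia)) as Hx1.
    unfold split_bound, absdiff in *; rewrite mb_colless_1 in Hx1.
    replace (x + 0 + 1) with (x + 1) by lia; lia.
  - rewrite !mb_colless_double_succ by lia.
    pose proof (IH (x + 1) y ltac:(lia) ltac:(lia) ltac:(lia)) as Hx1_y.
    pose proof (IH x (y + 1) ltac:(lia) ltac:(lia) ltac:(lia)) as Hx_y1.
    unfold split_bound, absdiff in *.
    replace (x + (y + 1)) with (x + y + 1) in Hx_y1 by lia.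
    replace (x + 1 + y) with (x + y + 1) in Hx1_y by lia; lia.
Qed.

End SplitBoundStep.

Lemma mb_colless_split_le (a b : nat) : 1 <= a -> 1 <= b -> split_bound a b.
Proof.
  remember (a + b) as m eqn:Hm; revert a b Hm.
  induction m as [m IHm] using lt_wf_ind; intros a b Hm Ha Hb.
  assert (IH : forall a' b', 1 <= a' -> 1 <= b' -> a' + b' < m -> split_bound a' b')
    by (intros a' b' Ha' Hb' Hlt; exact (IHm _ Hlt a' b' eq_refl Ha' Hb')).
  destruct (Nat.Even_or_Odd a) as [[x ->]|[x ->]];
  destruct (Nat.Even_or_Odd b) as [[y ->]|[y ->]].
  - apply (split_bound_even_even m IH); lia.
  - apply (split_bound_even_odd m IH); lia.
  - apply split_bound_comm, (split_bound_even_odd m IH); lia.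
  - apply (split_bound_odd_odd m IH); lia.
Qed.

Lemma leaves_pos (t : bintree) : 1 <= leaves t.
Proof. induction t; simpl; lia. Qed.

Lemma colless_max_balanced (t : bintree) :
  max_balanced t -> colless t = mb_colless (leaves t).
Proof.
  induction t as [|l IHl r IHr]; simpl; [reflexivity|].
  intros [Hbal [Hl Hr]].
  rewrite IHl, IHr, mb_colless_balanced_split by auto using leaves_pos.
  unfold bal; lia.
Qed.

Lemma mb_colless_le_colless (t : bintree) : mb_colless (leaves t) <= colless t.
Proof.
  induction t as [|l IHl r IHr]; simpl; [rewrite mb_colless_1; lia|].
  pose proof (mb_colless_split_le (leaves l) (leaves r) (leaves_pos l) (leaves_pos r)).
  unfold split_bound, bal in *; lia.
Qed.

Theorem theorem4 : forall (n : nat), 1 <= n ->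
  forall t : bintree, leaves t = n -> max_balanced t ->
  is_min_colless n (colless t).
Proof.
  intros n _ t Ht Hmb; split.
  - exists t; auto.
  - intros t' Ht'.
    rewrite colless_max_balanced, Ht, <- Ht' by exact Hmb.
    apply mb_colless_le_colless.
Qed.
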